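(* Let $B$ be a commutative ring with identity and $A$ a subring of $B$ containing the identity such that for any two distinct maximal ideals $M, M'$ of $B$, $(M\cap A)+(M'\cap A)=A$. Then for any two distinct maximal ideals $M\neq M'$ of $B$, $M\cap A$ and $M'\cap A$ are non-comparable, and $A$ is a weak completely normal subring of $B$.
   Context: $\operatorname{spec} A$ is the set of prime ideals of $A$ with the Zariski topology. A subring $A$ of $B$ is a weak completely normal subring of $B$ if for any two distinct maximal ideals $M\neq M'$ of $B$ such that $M\cap A$ and $M'\cap A$ are non-comparable, $\operatorname{cl}_{\operatorname{spec} A}\{M\cap A\}\cap \operatorname{cl}_{\operatorname{spec} A}\{M'\cap A\}=\emptyset$. *)

From HB Require Import structures.
From mathcomp Require Import all_boot all_algebra.
Set Implicit Arguments. Unset Strict Implicit. Unset Printing Implicit Defensive.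
Import GRing.Theory.
Local Open Scope ring_scope.

(* Subsets of a ring B are predicates B -> Prop.  A subring A of B is given
   by its carrier predicate S; ideals of A are subsets of S. *)
Section Defs.
Variable B : comNzRingType.

Definition subring_with_1 (S : B -> Prop) : Prop :=
  [/\ S 1, (forall x y, S x -> S y -> S (x - y)) & (forall x y, S x -> S y -> S (x * y))].

Definition is_ideal (S I : B -> Prop) : Prop :=
  [/\ (forall x, I x -> S x), I 0,
      (forall x y, I x -> I y -> I (x + y)) &
      (forall a x, S a -> I x -> I (a * x))].

Definition prime_ideal (S P : B -> Prop) : Prop :=
  [/\ is_ideal S P, ~ P 1 &
      forall a b, S a -> S b -> P (a * b) -> P a \/ P b].

Definition fullB : B -> Prop := fun _ => True.

Definition maximal_ideal (M : B -> Prop) : Prop :=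
  [/\ is_ideal fullB M, ~ M 1 &
      forall J, is_ideal fullB J -> (forall x, M x -> J x) ->
        (forall x, J x <-> M x) \/ (forall x, J x)].

Definition same_set (I J : B -> Prop) : Prop := forall x, I x <-> J x.

Definition contract (S M : B -> Prop) : B -> Prop := fun x => M x /\ S x.

Definition ideal_sum_is_whole (S I J : B -> Prop) : Prop :=
  forall a, S a <-> exists x y, [/\ I x, J y & a = x + y].

Definition ideals_comparable (I J : B -> Prop) : Prop :=
  (forall x, I x -> J x) \/ (forall x, J x -> I x).

Definition zariski_V (S E : B -> Prop) : (B -> Prop) -> Prop :=
  fun Q => prime_ideal S Q /\ forall x, E x -> Q x.

Definition zariski_closure (S : B -> Prop) (T : (B -> Prop) -> Prop)
  : (B -> Prop) -> Prop :=
  fun Q => prime_ideal S Q /\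
    forall E, (forall x, E x -> S x) ->
      (forall P, T P -> zariski_V S E P) -> zariski_V S E Q.

(* the singleton {P} in spec A (points up to extensional equality) *)
Definition singleton_pt (P : B -> Prop) : (B -> Prop) -> Prop :=
  fun Q => same_set Q P.

Definition weak_completely_normal (S : B -> Prop) : Prop :=
  forall M M', maximal_ideal M -> maximal_ideal M' -> ~ same_set M M' ->
    ~ ideals_comparable (contract S M) (contract S M') ->
    forall Q, ~ (zariski_closure S (singleton_pt (contract S M)) Q /\
                 zariski_closure S (singleton_pt (contract S M')) Q).

End Defs.

(* If (M ∩ A) + (M' ∩ A) = A, write 1 = x + y with x ∈ M ∩ A and y ∈ M' ∩ A.
   Any proper ideal of A containing both contractions would contain 1, so
   neither contraction contains the other.  A prime Q in the closure of the
   point M ∩ A of spec A lies in the closed set V(M ∩ A), i.e. contains M ∩ A;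
   a common point of both closures would therefore contain 1 as well. *)
From mathcomp Require Import all_boot all_algebra.
From Stdlib Require Import Classical.

Set Implicit Arguments.
Unset Strict Implicit.
Unset Printing Implicit Defensive.
Import GRing.Theory.
Local Open Scope ring_scope.

Section ContractedIdeals.
Variable B : comNzRingType.
Implicit Types (S I J P Q M : B -> Prop).

Lemma subring0 S : subring_with_1 S -> S 0.
Proof. by case=> S1 SB _; rewrite -(subrr 1); apply: SB. Qed.

Lemma subringD S : subring_with_1 S -> forall x y, S x -> S y -> S (x + y).
Proof.
move=> HS x y Sx Sy; have [_ SB _] := HS.
have -> : x + y = x - (0 - y) by rewrite sub0r opprK.
by apply: (SB) => //; apply: (SB) => //; apply: subring0.
Qed.

Lemma maximal_ideal_prime M : maximal_ideal M -> prime_ideal (@fullB B) M.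
Proof.
move=> HM; have [[_ M0 MD MM] M1 Mmax] := HM.
split=> // a b _ _ Mab; have [Ma | Ma] := classic (M a); [by left | right].
pose J x := exists m r, M m /\ x = m + r * a.
have HJ : is_ideal (@fullB B) J.
  split=> //.
  - by exists 0, 0; rewrite mul0r addr0.
  - move=> _ _ [m1 [r1 [Mm1 ->]]] [m2 [r2 [Mm2 ->]]].
    exists (m1 + m2), (r1 + r2); split; first exact: MD.
    by rewrite mulrDl addrACA.
  - move=> c _ _ [m [r [Mm ->]]]; exists (c * m), (c * r).
    by split; [exact: MM | rewrite mulrDr mulrA].
have MJ x : M x -> J x by exists x, 0; rewrite mul0r addr0.
case: (Mmax J HJ MJ) => [JM | Jfull].
  by case: Ma; apply/JM; exists 0, 1; rewrite mul1r add0r.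
have [m [r [Mm E]]] := Jfull 1.
have -> : b = b * m + r * (a * b) by rewrite mulrA [_ * b]mulrC -mulrDr -E mulr1.
by apply: MD; apply: MM.
Qed.

Lemma contract_prime S P :
  subring_with_1 S -> prime_ideal (@fullB B) P -> prime_ideal S (contract S P).
Proof.
move=> HS [[_ P0 PD PM] P1 Pprime]; have [_ _ SM] := HS.
split.
- split.
  + by move=> x [].
  + by split=> //; apply: subring0.
  + by move=> x y [Px Sx] [Py Sy]; split; [apply: PD | apply: subringD].
  + by move=> a x Sa [Px Sx]; split; [apply: PM | apply: SM].
- by case.
- by move=> a b Sa Sb [/Pprime Pab _]; case: (Pab I I) => ?; [left | right].
Qed.

Lemma prime_ideal_same_set S P Q : same_set Q P -> prime_ideal S P -> prime_ideal S Q.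
Proof.
move=> QP [[PS P0 PD PM] P1 Pprime]; split.
- split.
  + by move=> x /QP /PS.
  + exact/QP.
  + by move=> x y /QP Px /QP Py; apply/QP; apply: PD.
  + by move=> a x Sa /QP Px; apply/QP; apply: PM.
- by move/QP.
- by move=> a b Sa Sb /QP /Pprime[] // ?; [left | right]; apply/QP.
Qed.

Lemma zariski_closure_singleton_sub S P Q :
  prime_ideal S P -> zariski_closure S (singleton_pt P) Q -> forall x, P x -> Q x.
Proof.
move=> HP [_ closedQ]; have [[PS _ _ _] _ _] := HP.
apply: (closedQ P PS _).2 => P' P'P.
by split; [apply: prime_ideal_same_set HP | move=> x /P'P].
Qed.

Lemma ideal_sum_whole_no_proper_upper_bound S I J Q :
  S 1 -> ideal_sum_is_whole S I J -> is_ideal S Q -> ~ Q 1 ->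
  (forall x, I x -> Q x) -> (forall x, J x -> Q x) -> False.
Proof.
move=> S1 IJ [_ _ QD _] Q1 IQ JQ.
have [x [y [Ix Jy E]]] := (IJ 1).1 S1.
by apply: Q1; rewrite E; apply: QD; [apply: IQ | apply: JQ].
Qed.

Lemma ideal_sum_whole_incomparable S I J :
  S 1 -> ideal_sum_is_whole S I J -> prime_ideal S I -> prime_ideal S J ->
  ~ ideals_comparable I J.
Proof.
move=> S1 IJ [HI I1 _] [HJ J1 _] [IJsub | JIsub].
- exact: (ideal_sum_whole_no_proper_upper_bound S1 IJ HJ J1 IJsub (fun _ Jx => Jx)).
- exact: (ideal_sum_whole_no_proper_upper_bound S1 IJ HI I1 (fun _ Ix => Ix) JIsub).
Qed.

End ContractedIdeals.

Theorem lemma4p4 (B : comNzRingType) (S : B -> Prop) :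
  subring_with_1 S ->
  (forall M M' : B -> Prop, maximal_ideal M -> maximal_ideal M' ->
     ~ same_set M M' ->
     ideal_sum_is_whole S (contract S M) (contract S M')) ->
  (forall M M' : B -> Prop, maximal_ideal M -> maximal_ideal M' ->
     ~ same_set M M' -> ~ ideals_comparable (contract S M) (contract S M'))
  /\ weak_completely_normal S.
Proof.
move=> HS Hsum; have [S1 _ _] := HS.
have contract_max_prime M : maximal_ideal M -> prime_ideal S (contract S M).
  by move/maximal_ideal_prime; apply: contract_prime.
split=> M M' HM HM' MM'.
  exact: ideal_sum_whole_incomparable S1 (Hsum M M' HM HM' MM')
    (contract_max_prime M HM) (contract_max_prime M' HM').
move=> _ Q [clQ clQ']; have [[HQ Q1 _] _] := clQ.
apply: (ideal_sum_whole_no_proper_upper_bound S1 (Hsum M M' HM HM' MM') HQ Q1).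
- exact: zariski_closure_singleton_sub (contract_max_prime M HM) clQ.
- exact: zariski_closure_singleton_sub (contract_max_prime M' HM') clQ'.
Qed.
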